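(* Let $\mathsf{A}\in\mathcal{O}(\Omega,\mathcal{H})$ be a POVM and $\mathcal{J}\in\mathrm{Ins}(\Lambda,\mathcal{H},\mathcal{K})$ an instrument. Then $\mathsf{A}$ and $\mathcal{J}$ are compatible if and only if $\mathcal{J}\preceq\mathcal{I}^{\mathsf{A}}$, where $\mathcal{I}^{\mathsf{A}}$ is the Lüders instrument of $\mathsf{A}$.
   Context: All Hilbert spaces are finite-dimensional and complex, and all outcome sets are finite. A POVM $\mathsf{A}\in\mathcal{O}(\Omega,\mathcal{H})$ is a map $x\mapsto \mathsf{A}(x)$ from $\Omega$ to positive operators on $\mathcal{H}$ with $\sum_x \mathsf{A}(x)=I$. An instrument $\mathcal{J}\in\mathrm{Ins}(\Lambda,\mathcal{H},\mathcal{K})$ is a family $(\mathcal{J}_y)_{y\in\Lambda}$ of completely positive trace-nonincreasing linear maps $\mathcal{L}(\mathcal{H})\to\mathcal{L}(\mathcal{K})$ whose sum is trace preserving; its induced POVM $\mathsf{A}^{\mathcal{J}}$ is given by $\mathrm{tr}[\mathsf{A}^{\mathcal{J}}(y)\varrho]=\mathrm{tr}[\mathcal{J}_y(\varrho)]$. The Lüders instrument of $\mathsf{A}$ is $\mathcal{I}^{\mathsf{A}}\in\mathrm{Ins}(\Omega,\mathcal{H},\mathcal{H})$, $\mathcal{I}^{\mathsf{A}}_x(\varrho)=\sqrt{\mathsf{A}(x)}\varrho\sqrt{\mathsf{A}(x)}$. Postprocessing: $\mathcal{J}\preceq\mathcal{I}^{\mathsf{A}}$ if there exist instruments $\mathcal{R}^{(x)}\in\mathrm{Ins}(\Lambda,\mathcal{H},\mathcal{K})$,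 $x\in\Omega$, with $\mathcal{J}_y=\sum_x\mathcal{R}^{(x)}_y\circ\mathcal{I}^{\mathsf{A}}_x$ for all $y$. $\mathsf{A}$ and $\mathcal{J}$ are compatible if there exists an instrument $\mathcal{G}\in\mathrm{Ins}(\Omega\times\Lambda,\mathcal{H},\mathcal{K})$ with $\sum_x\mathcal{G}_{(x,y)}=\mathcal{J}_y$ for all $y$ and $\sum_y\mathsf{A}^{\mathcal{G}}(x,y)=\mathsf{A}(x)$ for all $x$. *)

(* Finite-dimensional quantum measurement theory:
   Hilbert spaces are C^n, operators are n x n matrices over a
   numClosedFieldType C (instantiated with the complex numbers R[i],
   R : realType, in the statement). *)
From HB Require Import structures.
From mathcomp Require Import all_boot all_order all_algebra.
From Stdlib Require Import ClassicalEpsilon.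
Set Implicit Arguments.
Unset Strict Implicit.
Unset Printing Implicit Defensive.
Import Order.TTheory GRing.Theory Num.Theory.
Local Open Scope ring_scope.

Section QDefs.
Variable C : numClosedFieldType.

Definition adjmx p q (A : 'M[C]_(p, q)) : 'M[C]_(q, p) := (map_mx Num.conj A)^T.

Definition psdmx p (A : 'M[C]_p) : Prop :=
  adjmx A = A /\ forall v : 'cV[C]_p, 0 <= (adjmx v *m A *m v) 0 0.

Definition povm (Omega : finType) n (A : Omega -> 'M[C]_n) : Prop :=
  (forall x, psdmx (A x)) /\ \sum_(x : Omega) A x = 1%:M.

Definition linear_map n m (f : 'M[C]_n -> 'M[C]_m) : Prop :=
  forall (a : C) (X Y : 'M[C]_n), f (a *: X + Y) = a *: f X + f Y.

(* amplification id_k (x) f, acting blockwise on k x k block matrices *)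
Definition ampl n m k (f : 'M[C]_n -> 'M[C]_m)
  (X : 'M[C]_(\sum_(i < k) (fun _ : 'I_k => n) i)) :
  'M[C]_(\sum_(i < k) (fun _ : 'I_k => m) i) :=
  \mxblock_(i < k, j < k) f (submxblock X i j).

Definition completely_positive n m (f : 'M[C]_n -> 'M[C]_m) : Prop :=
  forall (k : nat) (X : 'M[C]_(\sum_(i < k) (fun _ : 'I_k => n) i)),
    psdmx X -> psdmx (ampl f X).

Definition instrument (Lambda : finType) n m
  (J : Lambda -> 'M[C]_n -> 'M[C]_m) : Prop :=
  [/\ forall y, linear_map (J y),
      forall y, completely_positive (J y),
      forall y (rho : 'M[C]_n), psdmx rho -> \tr (J y rho) <= \tr rho
    & forall rho : 'M[C]_n, \tr (\sum_y J y rho) = \tr rho].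

(* induced POVM: tr[A^J(y) rho] = tr[J_y(rho)] for all rho; written out
   in matrix units: A^J(y)_{ij} = tr[J_y(E_{ji})]. *)
Definition induced_povm (Lambda : finType) n m
  (J : Lambda -> 'M[C]_n -> 'M[C]_m) (y : Lambda) : 'M[C]_n :=
  \matrix_(i, j) \tr (J y (delta_mx j i)).

(* the positive square root of a positive operator (unique, so the choice
   below picks it) *)
Definition psd_sqrt p (A : 'M[C]_p) : 'M[C]_p :=
  epsilon (inhabits 0) (fun B => psdmx B /\ B *m B = A).

Definition luders (Omega : finType) n (A : Omega -> 'M[C]_n)
  (x : Omega) (rho : 'M[C]_n) : 'M[C]_n :=
  psd_sqrt (A x) *m rho *m psd_sqrt (A x).

Definition postprocessing (Omega Lambda : finType) n m
  (J : Lambda -> 'M[C]_n -> 'M[C]_m) (I : Omega -> 'M[C]_n -> 'M[C]_n) : Prop :=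
  exists Rr : Omega -> Lambda -> 'M[C]_n -> 'M[C]_m,
    (forall x, instrument (Rr x)) /\
    (forall y (rho : 'M[C]_n), J y rho = \sum_(x : Omega) Rr x y (I x rho)).

Definition compatible (Omega Lambda : finType) n m
  (A : Omega -> 'M[C]_n) (J : Lambda -> 'M[C]_n -> 'M[C]_m) : Prop :=
  exists G : (Omega * Lambda)%type -> 'M[C]_n -> 'M[C]_m,
    [/\ instrument G,
        forall y (rho : 'M[C]_n), \sum_(x : Omega) G (x, y) rho = J y rho
      & forall x, \sum_(y : Lambda) induced_povm G (x, y) = A x].

End QDefs.

(* If [R] postprocesses the Lueders instrument, then
   [G_(x,y)(rho) = R^(x)_y(sqrt(A_x) rho sqrt(A_x))] is a joint instrument of [A]
   and [J].  Conversely, let [G] be a joint instrument and [K_x] the projection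
   onto the kernel of [sqrt(A_x)].  The traces of the positive operators
   [G_(x,y)(K_x)] sum over [y] to [tr(A_x K_x) = 0], so complete positivity
   forces [G_(x,y)] to vanish on [K_x X] and [X K_x].  Hence
   [G_(x,y)(rho) = G_(x,y)(Q_x sqrt(A_x) rho sqrt(A_x) Q_x)] with [Q_x] the
   pseudo-inverse of [sqrt(A_x)], and
   [R^(x)_y(s) = G_(x,y)(Q_x s Q_x) + J_y(K_x s K_x)] is a postprocessing: its
   [J]-term only restores the trace lost on the kernel. *)

From mathcomp Require Import all_boot all_order all_algebra.
From mathcomp Require Import reals complex.
From mathcomp Require Import ring.
From Stdlib Require Import ClassicalEpsilon.
Set Implicit Arguments.
Unset Strict Implicit.
Unset Printing Implicit Defensive.
Import Order.TTheory GRing.Theory Num.Theory.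
Local Open Scope ring_scope.

Section QuantumOperations.
Variable C : numClosedFieldType.

Lemma adjmxK p q (M : 'M[C]_(p, q)) : adjmx (adjmx M) = M.
Proof. by apply/matrixP => i j; rewrite !mxE conjCK. Qed.

Lemma adjmxM p q r (M : 'M[C]_(p, q)) (N : 'M[C]_(q, r)) :
  adjmx (M *m N) = adjmx N *m adjmx M.
Proof. by rewrite /adjmx map_mxM trmx_mul. Qed.

Lemma adjmxD p q (M N : 'M[C]_(p, q)) : adjmx (M + N) = adjmx M + adjmx N.
Proof. by rewrite /adjmx map_mxD linearD. Qed.

Lemma adjmxZ p q (a : C) (M : 'M[C]_(p, q)) : adjmx (a *: M) = a^* *: adjmx M.
Proof. by apply/matrixP => i j; rewrite !mxE rmorphM. Qed.

Lemma adjmx0 p q : adjmx (0 : 'M[C]_(p, q)) = 0.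
Proof. by apply/matrixP => i j; rewrite !mxE rmorph0. Qed.

Lemma adjmx1 p : adjmx (1%:M : 'M[C]_p) = 1%:M.
Proof.
by apply/matrixP => i j; rewrite !mxE eq_sym; case: eqP; rewrite ?rmorph1 ?rmorph0.
Qed.

Lemma adjmx_if p q (b : bool) (M : 'M[C]_(p, q)) :
  adjmx (if b then M else 0) = if b then adjmx M else 0.
Proof. by case: b; rewrite ?adjmx0. Qed.

Lemma adjmx_diag p (d : 'rV[C]_p) : adjmx (diag_mx d) = diag_mx (map_mx Num.conj d).
Proof.
apply/matrixP => i j; rewrite !mxE eq_sym.
by case: eqP => [->|]; rewrite ?mulr1n ?mulr0n ?rmorph0.
Qed.

Lemma adjmx_delta p (i : 'I_p) : adjmx (delta_mx i 0 : 'cV[C]_p) = delta_mx 0 i.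
Proof.
by apply/matrixP => a b; rewrite !mxE; case: eqP; case: eqP; rewrite /= ?rmorph1 ?rmorph0.
Qed.

Lemma adjmx_mxblock p q (p_ : 'I_p -> nat) (q_ : 'I_q -> nat)
    (M_ : forall i j, 'M[C]_(p_ i, q_ j)) :
  adjmx (\mxblock_(i, j) M_ i j) = \mxblock_(j, i) adjmx (M_ i j).
Proof. by apply/matrixP => a b; rewrite /adjmx /mxblock !mxE. Qed.

Lemma adjmx_mxcol p (p_ : 'I_p -> nat) r (M_ : forall i, 'M[C]_(p_ i, r)) :
  adjmx (\mxcol_i M_ i) = \mxrow_i adjmx (M_ i).
Proof. by apply/matrixP => a b; rewrite /adjmx /mxcol /mxrow !mxE. Qed.

Lemma adjmx_mxrow p (p_ : 'I_p -> nat) r (M_ : forall i, 'M[C]_(r, p_ i)) :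
  adjmx (\mxrow_i M_ i) = \mxcol_i adjmx (M_ i).
Proof. by apply/matrixP => a b; rewrite /adjmx /mxcol /mxrow !mxE. Qed.

Lemma adjmx_conjtr p q (M : 'M[C]_(p, q)) : adjmx M = (M ^t* )%sesqui.
Proof. by rewrite /adjmx map_trmx. Qed.

Definition qform p (M : 'M[C]_p) (u w : 'cV[C]_p) : C := (adjmx u *m M *m w) 0 0.

Lemma qform_delta p (M : 'M[C]_p) i j : qform M (delta_mx i 0) (delta_mx j 0) = M i j.
Proof. by rewrite /qform adjmx_delta -rowE -colE !mxE. Qed.

Lemma qform_adj p (M : 'M[C]_p) u w : adjmx M = M -> qform M w u = (qform M u w)^*.
Proof.
move=> hM; rewrite /qform.
have -> : adjmx w *m M *m u = adjmx (adjmx u *m M *m w).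
  by rewrite !adjmxM adjmxK hM mulmxA.
by rewrite !mxE.
Qed.

Lemma qform_expand p (M : 'M[C]_p) u w (t : C) :
  qform M (u + t *: w) (u + t *: w) =
  qform M u u + t * qform M u w + t^* * qform M w u + t^* * t * qform M w w.
Proof.
rewrite /qform adjmxD adjmxZ !(mulmxDl, mulmxDr) -!scalemxAl -!scalemxAr !mxE.
by rewrite !mulrA -!addrA; congr (_ + _); rewrite addrCA.
Qed.

Lemma psdmx_conj p q (M : 'M[C]_p) (K : 'M[C]_(q, p)) :
  psdmx M -> psdmx (K *m M *m adjmx K).
Proof.
case=> hM pM; split; first by rewrite !adjmxM adjmxK hM mulmxA.
by move=> v; have := pM (adjmx K *m v); rewrite adjmxM adjmxK !mulmxA.
Qed.

Lemma psdmx1 p : psdmx (1%:M : 'M[C]_p).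
Proof.
split=> [|v]; first exact: adjmx1.
by rewrite mulmx1 mxE; apply: sumr_ge0 => i _; rewrite !mxE mulrC mul_conjC_ge0.
Qed.

Lemma psdmxD p (M N : 'M[C]_p) : psdmx M -> psdmx N -> psdmx (M + N).
Proof.
case=> hM pM [hN pN]; split; first by rewrite adjmxD hM hN.
by move=> v; rewrite mulmxDr mulmxDl mxE addr_ge0.
Qed.

Lemma psdmx_diag p (d : 'rV[C]_p) : (forall j, 0 <= d 0 j) -> psdmx (diag_mx d).
Proof.
move=> d_ge0; split=> [|v].
  rewrite adjmx_diag; congr diag_mx; apply/matrixP => i j.
  by rewrite !mxE ord1 conj_Creal // ger0_real.
rewrite mul_mx_diag mxE; apply: sumr_ge0 => j _.
by rewrite !mxE mulrAC mulr_ge0 // mulrC mul_conjC_ge0.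
Qed.

Lemma psdmx_diag_ge0 p (M : 'M[C]_p) i : psdmx M -> 0 <= M i i.
Proof. by case=> _ /(_ (delta_mx i 0)); rewrite -[_ 0 0]/(qform _ _ _) qform_delta. Qed.

Lemma psdmx_mxtrace_ge0 p (M : 'M[C]_p) : psdmx M -> 0 <= \tr M.
Proof. by move=> pM; apply: sumr_ge0 => i _; exact: psdmx_diag_ge0. Qed.

(* If [<w, M w> = 0] but [c := <u, M w> != 0], then [v := u + t w] with
   [t := - (<u, M u> + 1) / 2c] has [<v, M v> = -1]. *)
Lemma psdmx_qform_null p (M : 'M[C]_p) u w :
  psdmx M -> qform M w w = 0 -> qform M u w = 0.
Proof.
case=> hM pM ww0; apply/eqP/negPn/negP => c_neq0.
set a := qform M u u; set c := qform M u w.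
have a_ge0 : 0 <= a := pM u.
set t := - (a + 1) / (c *+ 2).
have tc : t * c = - (a + 1) / 2%:R by rewrite /t; field.
have := pM (u + t *: w); rewrite -[_ 0 0]/(qform _ _ _) qform_expand ww0 mulr0 addr0.
rewrite (qform_adj u w hM) -/a -/c.
have -> : t^* * c^* = (t * c)^* by rewrite [RHS]rmorphM.
rewrite tc conj_Creal; last first.
  by rewrite rpredM ?rpredN ?rpredD ?rpredV ?ger0_real ?ler01 ?ler0n.
have -> : a + - (a + 1) / 2%:R + - (a + 1) / 2%:R = -1 by field.
by rewrite lerNr oppr0 ler10.
Qed.

Lemma psdmx_mxtrace_eq0 p (M : 'M[C]_p) : psdmx M -> \tr M = 0 -> M = 0.
Proof.
move=> pM /eqP; rewrite psumr_eq0 => [/allP diag0|i _]; last exact: psdmx_diag_ge0.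
apply/matrixP => i j; rewrite mxE -qform_delta.
apply: psdmx_qform_null => //; rewrite qform_delta.
by apply/eqP/(implyP (diag0 j (mem_index_enum _))).
Qed.

Section LinearMap.
Variables (n m : nat) (f : 'M[C]_n -> 'M[C]_m).
Hypothesis f_lin : linear_map f.

Lemma linear_map0 : f 0 = 0.
Proof.
have := f_lin 1 0 0; rewrite scale1r addr0 scale1r => f00.
by apply: (@addrI _ (f 0)); rewrite addr0 -f00.
Qed.

Lemma linear_mapD X Y : f (X + Y) = f X + f Y.
Proof. by have := f_lin 1 X Y; rewrite !scale1r. Qed.

Lemma linear_mapZ a X : f (a *: X) = a *: f X.
Proof. by have := f_lin a X 0; rewrite !addr0 linear_map0 addr0. Qed.

Lemma linear_map_sum (I : finType) (F : I -> 'M[C]_n) : f (\sum_i F i) = \sum_i f (F i).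
Proof. exact: (big_morph f linear_mapD linear_map0). Qed.

End LinearMap.

Lemma linear_map_comp n m l (f : 'M[C]_m -> 'M[C]_l) (g : 'M[C]_n -> 'M[C]_m) :
  linear_map f -> linear_map g -> linear_map (fun X => f (g X)).
Proof. by move=> f_lin g_lin a X Y; rewrite g_lin f_lin. Qed.

Lemma linear_map_add n m (f g : 'M[C]_n -> 'M[C]_m) :
  linear_map f -> linear_map g -> linear_map (fun X => f X + g X).
Proof.
move=> f_lin g_lin a X Y; rewrite f_lin g_lin scalerDr.
by rewrite -!addrA; congr (_ + _); rewrite addrCA.
Qed.

Lemma linear_map_conj n m (K : 'M[C]_(m, n)) : linear_map (fun X => K *m X *m adjmx K).
Proof. by move=> a X Y; rewrite mulmxDr mulmxDl -scalemxAr -scalemxAl. Qed.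

Lemma sum_mulmx_ifl k r s t (M : 'M[C]_(r, s)) (N_ : 'I_k -> 'M[C]_(s, t)) i :
  \sum_j ((if j == i then M else 0) *m N_ j) = M *m N_ i.
Proof. by rewrite (bigD1 i) //= eqxx big1 ?addr0 // => j /negbTE ->; rewrite mul0mx. Qed.

Lemma sum_mulmx_ifr k r s t (M : 'M[C]_(s, t)) (N_ : 'I_k -> 'M[C]_(r, s)) i :
  \sum_j (N_ j *m (if j == i then M else 0)) = N_ i *m M.
Proof. by rewrite (bigD1 i) //= eqxx big1 ?addr0 // => j /negbTE ->; rewrite mulmx0. Qed.

Lemma ampl_comp n m l k (f : 'M[C]_m -> 'M[C]_l) (g : 'M[C]_n -> 'M[C]_m) X :
  ampl (k := k) (fun Y => f (g Y)) X = ampl f (ampl g X).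
Proof. by apply: eq_mxblock => i j; rewrite mxblockK. Qed.

Lemma ampl_add n m k (f g : 'M[C]_n -> 'M[C]_m) X :
  ampl (k := k) (fun Y => f Y + g Y) X = ampl f X + ampl g X.
Proof. by rewrite /ampl mxblockD. Qed.

Lemma cp_comp n m l (f : 'M[C]_m -> 'M[C]_l) (g : 'M[C]_n -> 'M[C]_m) :
  completely_positive f -> completely_positive g ->
  completely_positive (fun X => f (g X)).
Proof. by move=> f_cp g_cp k X pX; rewrite ampl_comp; apply/f_cp/g_cp. Qed.

Lemma cp_add n m (f g : 'M[C]_n -> 'M[C]_m) :
  completely_positive f -> completely_positive g ->
  completely_positive (fun X => f X + g X).
Proof.
by move=> f_cp g_cp k X pX; rewrite ampl_add; apply: psdmxD; [apply: f_cp|apply: g_cp].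
Qed.

(* The amplification of [X |-> K X K^*] is conjugation by the block diagonal
   matrix with blocks [K]. *)
Lemma cp_conj n m (K : 'M[C]_(m, n)) : completely_positive (fun X => K *m X *m adjmx K).
Proof.
move=> k X pX.
pose D := @mxblock _ k k (fun _ => m) (fun _ => n) (fun i j => if j == i then K else 0).
suff -> : ampl (fun X => K *m X *m adjmx K) X = D *m X *m adjmx D by apply: psdmx_conj.
rewrite -[X in D *m X]submxblockK mul_mxblock adjmx_mxblock mul_mxblock.
apply: eq_mxblock => i j; under eq_bigr do rewrite sum_mulmx_ifl adjmx_if.
by rewrite sum_mulmx_ifr.
Qed.

Lemma cp_psdmx n m (f : 'M[C]_n -> 'M[C]_m) (rho : 'M[C]_n) :
  completely_positive f -> psdmx rho -> psdmx (f rho).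
Proof.
move=> f_cp prho.
pose E p := @mxcol C 1 (fun _ => p) p (fun _ => 1%:M).
have blockE p (Y : 'M[C]_p) :
    E p *m Y *m adjmx (E p) = @mxblock _ 1 1 (fun _ => p) (fun _ => p) (fun _ _ => Y).
  rewrite adjmx_mxcol mxcol_mul mul_mxcol_mxrow.
  by apply: eq_mxblock => i j; rewrite mul1mx adjmx1 mulmx1.
have := f_cp 1%N _ (psdmx_conj (E n) prho); rewrite blockE.
have -> : ampl f (@mxblock _ 1 1 (fun _ => n) (fun _ => n) (fun _ _ => rho)) =
    @mxblock _ 1 1 (fun _ => m) (fun _ => m) (fun _ _ => f rho).
  by apply: eq_mxblock => i j; rewrite mxblockK.
move=> /(psdmx_conj (adjmx (E m))); rewrite adjmxK adjmx_mxcol.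
by rewrite mul_mxrow_mxblock mul_mxrow_mxcol !big_ord1 adjmx1 mul1mx mulmx1.
Qed.

Lemma qform_mxblock k p (M_ : 'I_k -> 'I_k -> 'M[C]_p) i j (u w : 'cV[C]_p) :
  qform (\mxblock_(i, j) M_ i j) (\mxcol_l (if l == i then u else 0))
    (\mxcol_l (if l == j then w else 0)) = qform (M_ i j) u w.
Proof.
rewrite /qform adjmx_mxcol; under eq_mxrow do rewrite adjmx_if.
rewrite mul_mxrow_mxblock mul_mxrow_mxcol.
by under eq_bigr do rewrite sum_mulmx_ifl; rewrite sum_mulmx_ifr.
Qed.

Lemma psdmx_mxblock_null k p (M_ : 'I_k -> 'I_k -> 'M[C]_p) i j :
  psdmx (\mxblock_(i, j) M_ i j) -> M_ j j = 0 -> M_ i j = 0 /\ M_ j i = 0.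
Proof.
move=> pM Mjj0.
have null a b : qform (M_ i j) (delta_mx a 0) (delta_mx b 0) = 0.
  rewrite -qform_mxblock; apply: psdmx_qform_null => //.
  by rewrite qform_mxblock Mjj0 /qform mulmx0 mul0mx mxE.
split; apply/matrixP => a b; rewrite mxE -qform_delta //.
by rewrite -qform_mxblock (qform_adj _ _ pM.1) qform_mxblock null conjC0.
Qed.

(* Complete positivity applied to the positive block matrix [W^* W] with
   [W = (X K)]. *)
Lemma cp_vanish n m (f : 'M[C]_n -> 'M[C]_m) (K : 'M[C]_n) :
  completely_positive f -> f (adjmx K *m K) = 0 ->
  forall X, f (adjmx X *m K) = 0 /\ f (adjmx K *m X) = 0.
Proof.
move=> f_cp fK0 X.
pose W := @mxrow C 2 (fun _ => n) n (fun j => if j == 0 then X else K).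
have := psdmx_conj (adjmx W) (psdmx1 n); rewrite mulmx1 adjmxK.
rewrite /W adjmx_mxrow mul_mxcol_mxrow => /f_cp.
rewrite /ampl; under eq_mxblock do rewrite mxblockK.
by move=> /(@psdmx_mxblock_null 2 m _ 0 1); apply.
Qed.

Lemma mxtrace_sum (I : finType) p (F : I -> 'M[C]_p) : \tr (\sum_i F i) = \sum_i \tr (F i).
Proof. exact: (big_morph _ (@mxtraceD _ _) (mxtrace0 _ _)). Qed.

Lemma mxtrace_induced_povm (Lambda : finType) n m (J : Lambda -> 'M[C]_n -> 'M[C]_m)
    y rho :
  linear_map (J y) -> \tr (J y rho) = \tr (induced_povm J y *m rho).
Proof.
move=> J_lin; rewrite {1}[rho]matrix_sum_delta (linear_map_sum J_lin) mxtrace_sum.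
under eq_bigr do rewrite (linear_map_sum J_lin) mxtrace_sum.
under eq_bigr do under eq_bigr do rewrite (linear_mapZ J_lin) mxtraceZ.
rewrite [RHS]/mxtrace; under [RHS]eq_bigr do rewrite mxE.
rewrite [RHS]exchange_big /=; apply: eq_bigr => i _; apply: eq_bigr => j _.
by rewrite mxE mulrC.
Qed.

Lemma mxtrace_mul_delta p (M : 'M[C]_p) i j : \tr (M *m delta_mx j i) = M i j.
Proof.
rewrite -(mul_delta_mx (0 : 'I_1)) mulmxA -colE mxtrace_mulC -rowE.
by rewrite /mxtrace big_ord1 !mxE.
Qed.

(** * Spectral calculus of positive operators *)

Lemma psdmx_spectral p (M : 'M[C]_p) (U := spectralmx M) (d := spectral_diag M) :
  psdmx M ->
  [/\ U *m adjmx U = 1%:M, adjmx U *m U = 1%:M, forall i, 0 <= d 0 i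
    & M = adjmx U *m diag_mx d *m U].
Proof.
move=> pM; have M_normal : M \is normalmx by apply/normalmxP; rewrite -adjmx_conjtr pM.1.
have U_unitary : U \is unitarymx := spectral_unitarymx M.
have UU' : U *m adjmx U = 1%:M by rewrite adjmx_conjtr; apply/unitarymxP.
have U'U : adjmx U *m U = 1%:M.
  by rewrite adjmx_conjtr -(invmx_unitary U_unitary) mulVmx // unitarymx_unit.
have ME : M = adjmx U *m diag_mx d *m U.
  by rewrite adjmx_conjtr -invmx_unitary //; apply: orthomx_spectralP.
split => // i; have := psdmx_diag_ge0 i (psdmx_conj U pM).
by rewrite ME !mulmxA UU' mul1mx -mulmxA UU' mulmx1 mxE eqxx mulr1n.
Qed.

Section SpectralFun.
Variables (p : nat) (U : 'M[C]_p).
Hypotheses (UU' : U *m adjmx U = 1%:M) (U'U : adjmx U *m U = 1%:M).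

Definition spectral_fun (g : 'I_p -> C) := adjmx U *m diag_mx (\row_j g j) *m U.

Lemma eq_spectral_fun g h : g =1 h -> spectral_fun g = spectral_fun h.
Proof. by move=> gh; congr (_ *m diag_mx _ *m _); apply/matrixP => i j; rewrite !mxE gh. Qed.

Lemma spectral_funM g h :
  spectral_fun g *m spectral_fun h = spectral_fun (fun j => g j * h j).
Proof.
rewrite /spectral_fun !mulmxA -[_ *m U *m adjmx U]mulmxA UU' mulmx1.
rewrite -[_ *m diag_mx _ *m diag_mx _]mulmxA mulmx_diag.
by congr (_ *m diag_mx _ *m _); apply/matrixP => i j; rewrite !mxE.
Qed.

Lemma spectral_funD g h :
  spectral_fun g + spectral_fun h = spectral_fun (fun j => g j + h j).
Proof.
rewrite /spectral_fun -mulmxDl -mulmxDr; congr (_ *m _ *m _).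
by apply/matrixP => i j; rewrite !mxE mulrnDl.
Qed.

Lemma adjmx_spectral_fun_real g :
  (forall j, g j \is Num.real) -> adjmx (spectral_fun g) = spectral_fun g.
Proof.
move=> g_real; rewrite /spectral_fun !adjmxM adjmxK adjmx_diag mulmxA.
by congr (_ *m diag_mx _ *m _); apply/matrixP => i j; rewrite !mxE conj_Creal.
Qed.

Lemma spectral_fun1 : spectral_fun (fun _ => 1) = 1%:M.
Proof.
rewrite /spectral_fun.
have -> : \row_(j < p) (1 : C) = const_mx 1 by apply/matrixP => i j; rewrite !mxE.
by rewrite diag_const_mx mulmx1.
Qed.

Lemma spectral_fun0 : spectral_fun (fun _ => 0) = 0.
Proof.
rewrite /spectral_fun.
have -> : \row_(j < p) (0 : C) = 0 by apply/matrixP => i j; rewrite !mxE.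
by rewrite linear0 mulmx0 mul0mx.
Qed.

Lemma psdmx_spectral_fun g : (forall j, 0 <= g j) -> psdmx (spectral_fun g).
Proof.
move=> g_ge0; rewrite /spectral_fun -{2}[U]adjmxK; apply/psdmx_conj/psdmx_diag => j.
by rewrite mxE.
Qed.

End SpectralFun.

Lemma psd_sqrtP p (M : 'M[C]_p) :
  psdmx M -> psdmx (psd_sqrt M) /\ psd_sqrt M *m psd_sqrt M = M.
Proof.
move=> pM; apply: (epsilon_spec (inhabits 0) (fun B => psdmx B /\ B *m B = M)).
have [UU' U'U d_ge0 ME] := psdmx_spectral pM.
exists (spectral_fun (spectralmx M) (fun j => sqrtC (spectral_diag M 0 j))); split.
  by apply: psdmx_spectral_fun => // j; rewrite sqrtC_ge0.
rewrite spectral_funM // [RHS]ME; congr (_ *m diag_mx _ *m _); apply/matrixP => i j.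
by rewrite !mxE ord1 -expr2 sqrtCK.
Qed.

(* Since [0^-1 = 0], [x * x^-1] is the indicator of [x != 0]. *)
Definition psd_pinv p (B : 'M[C]_p) :=
  spectral_fun (spectralmx B) (fun j => (spectral_diag B 0 j)^-1).
Definition supp_proj p (B : 'M[C]_p) :=
  spectral_fun (spectralmx B) (fun j => spectral_diag B 0 j * (spectral_diag B 0 j)^-1).
Definition ker_proj p (B : 'M[C]_p) :=
  spectral_fun (spectralmx B) (fun j => 1 - spectral_diag B 0 j * (spectral_diag B 0 j)^-1).

Section PseudoInverse.
Variables (p : nat) (B : 'M[C]_p).
Hypothesis pB : psdmx B.

Local Notation U := (spectralmx B).
Local Notation b j := (spectral_diag B 0 j).
Let UU' : U *m adjmx U = 1%:M. Proof. by case: (psdmx_spectral pB). Qed.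
Let U'U : adjmx U *m U = 1%:M. Proof. by case: (psdmx_spectral pB). Qed.
Let b_real j : b j \is Num.real.
Proof. by case: (psdmx_spectral pB) => _ _ b_ge0 _; rewrite ger0_real. Qed.

Lemma spectral_fun_eigenE : B = spectral_fun U (fun j => b j).
Proof.
case: (psdmx_spectral pB) => _ _ _ {1}->; congr (_ *m diag_mx _ *m _).
by apply/matrixP => i j; rewrite !mxE ord1.
Qed.

Lemma psd_pinvM : psd_pinv B *m B = supp_proj B.
Proof.
by rewrite {2}spectral_fun_eigenE spectral_funM //; apply: eq_spectral_fun => j; rewrite mulrC.
Qed.

Lemma adjmx_psd_pinv : adjmx (psd_pinv B) = psd_pinv B.
Proof. by apply: adjmx_spectral_fun_real => // j; rewrite rpredV; apply: b_real. Qed.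

Lemma adjmx_supp_proj : adjmx (supp_proj B) = supp_proj B.
Proof.
by apply: adjmx_spectral_fun_real => // j; rewrite rpredM ?rpredV //; apply: b_real.
Qed.

Lemma adjmx_ker_proj : adjmx (ker_proj B) = ker_proj B.
Proof.
apply: adjmx_spectral_fun_real => // j.
by rewrite rpredB ?rpred1 ?rpredM ?rpredV //; apply: b_real.
Qed.

Let ker_b j : (1 - b j * (b j)^-1) * b j = 0.
Proof. by have [->|nz] := eqVneq (b j) 0; rewrite ?mulr0 // mulfV // subrr mul0r. Qed.

Lemma ker_projM : ker_proj B *m B = 0.
Proof.
rewrite {2}spectral_fun_eigenE spectral_funM // -(spectral_fun0 U).
by apply: eq_spectral_fun => j; apply: ker_b.
Qed.

Lemma mulmx_ker_proj : B *m ker_proj B = 0.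
Proof.
rewrite {1}spectral_fun_eigenE spectral_funM // -(spectral_fun0 U).
by apply: eq_spectral_fun => j; rewrite mulrC ker_b.
Qed.

Lemma psdmx_ker_proj : psdmx (ker_proj B).
Proof.
apply: psdmx_spectral_fun => // j.
by have [->|nz] := eqVneq (b j) 0; rewrite ?mul0r ?subr0 ?ler01 // mulfV // subrr.
Qed.

Lemma ker_proj_idem : ker_proj B *m ker_proj B = ker_proj B.
Proof.
rewrite spectral_funM //; apply: eq_spectral_fun => j.
have [->|nz] := eqVneq (b j) 0; first by rewrite mul0r subr0 mulr1.
by rewrite mulfV // subrr mulr0.
Qed.

Lemma supp_projDker : supp_proj B + ker_proj B = 1%:M.
Proof.
rewrite spectral_funD // -(spectral_fun1 U'U).
by apply: eq_spectral_fun => j; rewrite addrC subrK.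
Qed.

Lemma psd_pinv_conj_sqr : psd_pinv B *m (B *m B) *m psd_pinv B = supp_proj B.
Proof.
rewrite {2 3}spectral_fun_eigenE !spectral_funM //; apply: eq_spectral_fun => j.
have [->|nz] := eqVneq (b j) 0; first by rewrite invr0 !(mul0r, mulr0).
by field.
Qed.

End PseudoInverse.

Lemma mxtrace_psd_sqrt_conj p (M rho : 'M[C]_p) :
  psdmx M -> \tr (psd_sqrt M *m rho *m adjmx (psd_sqrt M)) = \tr (M *m rho).
Proof.
move=> /psd_sqrtP[[sqrt_adj _] sqrt_sqr].
by rewrite sqrt_adj mxtrace_mulC mulmxA sqrt_sqr.
Qed.

Lemma mxtrace_psdmx_mul_ge0 p (M rho : 'M[C]_p) :
  psdmx M -> psdmx rho -> 0 <= \tr (M *m rho).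
Proof.
by move=> pM prho; rewrite -mxtrace_psd_sqrt_conj //; apply/psdmx_mxtrace_ge0/psdmx_conj.
Qed.

Lemma povm_mxtrace_sum (Omega : finType) n (A : Omega -> 'M[C]_n) rho :
  povm A -> \sum_x \tr (A x *m rho) = \tr rho.
Proof. by case=> _ sumA; rewrite -mxtrace_sum -mulmx_suml sumA mul1mx. Qed.

Lemma povm_mxtrace_le (Omega : finType) n (A : Omega -> 'M[C]_n) rho x :
  povm A -> psdmx rho -> \tr (A x *m rho) <= \tr rho.
Proof.
move=> A_povm prho; rewrite -(povm_mxtrace_sum rho A_povm) (bigD1 x) //= lerDl.
by apply: sumr_ge0 => x' _; apply: mxtrace_psdmx_mul_ge0 => //; case: A_povm.
Qed.

(** * Postprocessings of the Lueders instrument *)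

Section Luders.
Variables (Omega : finType) (n : nat) (A : Omega -> 'M[C]_n).
Hypothesis A_povm : povm A.

Local Notation B x := (psd_sqrt (A x)).

Let psdB x : psdmx (B x). Proof. exact: (psd_sqrtP (A_povm.1 x)).1. Qed.
Let sqrB x : B x *m B x = A x. Proof. exact: (psd_sqrtP (A_povm.1 x)).2. Qed.

Let mxtrace_conjB x rho : \tr (B x *m rho *m adjmx (B x)) = \tr (A x *m rho).
Proof. exact/mxtrace_psd_sqrt_conj/(A_povm.1 x). Qed.

Lemma ludersE x rho : luders A x rho = B x *m rho *m adjmx (B x).
Proof. by rewrite (psdB x).1. Qed.

Lemma postprocessing_luders_compatible (Lambda : finType) m
    (J : Lambda -> 'M[C]_n -> 'M[C]_m) :
  postprocessing J (luders A) -> compatible A J.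
Proof.
case=> Rr [R_ins JE].
have R_tr x s : \tr (\sum_y Rr x y s) = \tr s by case: (R_ins x).
exists (fun q rho => Rr q.1 q.2 (B q.1 *m rho *m adjmx (B q.1))); split.
- split.
  + by move=> [x y]; case: (R_ins x) => R_lin _ _ _; apply/linear_map_comp/linear_map_conj.
  + by move=> [x y]; case: (R_ins x) => _ R_cp _ _; apply/cp_comp/cp_conj.
  + move=> [x y] rho prho; case: (R_ins x) => _ _ R_le _.
    apply: le_trans (R_le y _ (psdmx_conj _ prho)) _.
    by rewrite mxtrace_conjB; apply: povm_mxtrace_le.
  + move=> rho; rewrite mxtrace_sum.
    rewrite -(pair_bigA _ (fun x y => \tr (Rr x y (B x *m rho *m adjmx (B x))))) /=.
    under eq_bigr => x _ do rewrite -mxtrace_sum R_tr mxtrace_conjB.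
    exact: povm_mxtrace_sum.
- by move=> y rho; rewrite JE; apply: eq_bigr => x _; rewrite ludersE.
- move=> x; apply/matrixP => i j; rewrite summxE.
  under eq_bigr do rewrite mxE.
  by rewrite -mxtrace_sum /= R_tr mxtrace_conjB mxtrace_mul_delta.
Qed.

Section JointInstrument.
Variables (Lambda : finType) (m : nat) (J : Lambda -> 'M[C]_n -> 'M[C]_m).
Variable G : (Omega * Lambda)%type -> 'M[C]_n -> 'M[C]_m.
Hypotheses (J_ins : instrument J) (G_ins : instrument G).
Hypothesis G_J : forall y rho, \sum_x G (x, y) rho = J y rho.
Hypothesis G_A : forall x, \sum_y induced_povm G (x, y) = A x.

Local Notation Q x := (psd_pinv (B x)).
Local Notation P x := (supp_proj (B x)).
Local Notation K x := (ker_proj (B x)).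

Lemma joint_mxtrace_marginal x rho : \sum_y \tr (G (x, y) rho) = \tr (A x *m rho).
Proof.
have [G_lin _ _ _] := G_ins.
under eq_bigr do rewrite (mxtrace_induced_povm _ (G_lin _)).
by rewrite -mxtrace_sum -mulmx_suml G_A.
Qed.

Lemma joint_vanish_ker x y X :
  G (x, y) (K x *m X) = 0 /\ G (x, y) (X *m K x) = 0.
Proof.
have [_ G_cp _ _] := G_ins.
have K_adj := adjmx_ker_proj (psdB x).
have GK0 : G (x, y) (adjmx (K x) *m K x) = 0.
  rewrite K_adj ker_proj_idem //; apply: psdmx_mxtrace_eq0.
    exact/(cp_psdmx (G_cp _))/psdmx_ker_proj.
  have AK0 : A x *m K x = 0 by rewrite -{1}sqrB -mulmxA mulmx_ker_proj // mulmx0.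
  apply/eqP; move: (joint_mxtrace_marginal x (K x)); rewrite AK0 mxtrace0 => /eqP.
  rewrite psumr_eq0 => [/allP/(_ y (mem_index_enum _))/implyP/(_ isT) //|y' _].
  exact/psdmx_mxtrace_ge0/(cp_psdmx (G_cp _))/psdmx_ker_proj.
have [_ GKX] := cp_vanish (G_cp (x, y)) GK0 X.
have [GXK _] := cp_vanish (G_cp (x, y)) GK0 (adjmx X).
by rewrite K_adj in GKX; rewrite adjmxK in GXK.
Qed.

Lemma joint_supp_proj x y rho : G (x, y) (P x *m rho *m P x) = G (x, y) rho.
Proof.
have [G_lin _ _ _] := G_ins.
have {2}-> : rho = (P x + K x) *m rho *m (P x + K x).
  by rewrite supp_projDker // mul1mx mulmx1.
rewrite mulmxDl mulmxDl mulmxDr -[K x *m _ *m _]mulmxA !(linear_mapD (G_lin _)).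
by rewrite (joint_vanish_ker x y _).1 (joint_vanish_ker x y _).2 !addr0.
Qed.

Definition luders_postproc x y s :=
  G (x, y) (Q x *m s *m adjmx (Q x)) + J y (K x *m s *m adjmx (K x)).

Lemma mxtrace_luders_postproc x s : \tr (\sum_y luders_postproc x y s) = \tr s.
Proof.
have [_ _ _ J_tr] := J_ins.
have QAQ : Q x *m A x *m Q x = P x by rewrite -(psd_pinv_conj_sqr (psdB x)) sqrB.
rewrite mxtrace_sum; under eq_bigr do rewrite mxtraceD.
rewrite big_split /= joint_mxtrace_marginal -mxtrace_sum J_tr.
have cyc3 (X Y Z : 'M[C]_n) : \tr (X *m (Y *m Z *m Y)) = \tr (Y *m X *m Y *m Z).
  by rewrite mulmxA mxtrace_mulC !mulmxA.
have cyc2 (Y Z : 'M[C]_n) : \tr (Y *m Z *m Y) = \tr (Y *m Y *m Z).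
  by rewrite mxtrace_mulC mulmxA.
rewrite adjmx_psd_pinv // adjmx_ker_proj // cyc3 cyc2 QAQ ker_proj_idem //.
by rewrite -mxtraceD -mulmxDl supp_projDker // mul1mx.
Qed.

Lemma luders_postproc_instrument x : instrument (luders_postproc x).
Proof.
have [G_lin G_cp _ _] := G_ins; have [J_lin J_cp _ _] := J_ins.
split=> [y|y|y s ps|s]; last exact: mxtrace_luders_postproc.
- by apply: linear_map_add; apply: linear_map_comp => //; apply: linear_map_conj.
- by apply: cp_add; apply: cp_comp => //; apply: cp_conj.
- rewrite -(mxtrace_luders_postproc x s) mxtrace_sum (bigD1 y) //= lerDl.
  apply: sumr_ge0 => y' _; rewrite mxtraceD.
  by apply: addr_ge0; apply/psdmx_mxtrace_ge0/cp_psdmx/psdmx_conj.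
Qed.

Lemma luders_postprocE y rho : \sum_x luders_postproc x y (luders A x rho) = J y rho.
Proof.
have [J_lin _ _ _] := J_ins.
rewrite -G_J; apply: eq_bigr => x _; rewrite ludersE /luders_postproc !mulmxA.
rewrite ker_projM // !mul0mx (linear_map0 (J_lin _)) addr0 psd_pinvM //.
by rewrite -mulmxA -adjmxM psd_pinvM // adjmx_supp_proj // joint_supp_proj.
Qed.

End JointInstrument.

Lemma compatible_postprocessing_luders (Lambda : finType) m
    (J : Lambda -> 'M[C]_n -> 'M[C]_m) :
  instrument J -> compatible A J -> postprocessing J (luders A).
Proof.
move=> J_ins [G [G_ins G_J G_A]]; exists (luders_postproc J G); split.
- exact: luders_postproc_instrument.
- by move=> y rho; rewrite luders_postprocE.
Qed.

End Luders.

End QuantumOperations.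

Unset Implicit Arguments.
Set Strict Implicit.

Theorem corollary3 (R : realType) (Omega Lambda : finType) (n m : nat)
  (A : Omega -> 'M[R[i]]_n) (J : Lambda -> 'M[R[i]]_n -> 'M[R[i]]_m) :
  povm A -> instrument J ->
  (compatible A J <-> postprocessing J (luders A)).
Proof.
move=> A_povm J_ins; split.
- exact: compatible_postprocessing_luders.
- exact: postprocessing_luders_compatible.
Qed.
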